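(* Let $\Omega\subset\mathbb{R}^2$ be a bounded domain and $h>0$, with the discrete setting described in the context. For a discrete triple $(\vec U^*,\vec v^*,\omega^* )$ with $\vec U^*=(U^*_x,U^*_y)$ a grid vector field on the edges, $\vec v^*\in\mathbb{R}^2$, $\omega^*\in\mathbb{R}$, define the discrete kinetic energy \[ E_h(\vec U^*,\vec v^*,\omega^* )=\tfrac12\sum_{i,j}\big((\rho H(U_x^* )^2)_{i+1/2,j}+(\rho H(U_y^* )^2)_{i,j+1/2}\big)h^2+\tfrac12m|\vec v^*|^2+\tfrac12\omega^*\mathbb{I}\omega^*. \] Let $p\in\{1_{\Omega^h}\}^\perp$ be the solution of $L^hp=-\operatorname{D}(H\vec U^* )+\vec v^*\cdot\operatorname{G}H+\omega^*\vec J^h$ in $\Omega^h$, and let \[ (\vec U,\vec v,\omega)=(\vec U^*,\vec v^*,\omega^* )-\Big(\tfrac1\rho\operatorname{G}p,\;\tfrac1m\sum_{k,l}(p\operatorname{G}H)_{kl}h^2,\;\mathbb{I}^{-1}\sum_{k,l}(p\vec J^h)_{kl}h^2\Big). \] Then $E_h(\vec U^*,\vec v^*,\omega^* )\ge E_h(\vec U,\vec v,\omega)$.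
   Context: Grid: $x_i=ih$, $y_j=jh$, $x_{i\pm1/2}=(i\pm\frac12)h$; $C_{ij}=[x_{i-1/2},x_{i+1/2}]\times[y_{j-1/2},y_{j+1/2}]$, edges $E_{i+1/2,j}=\{x_{i+1/2}\}\times[y_{j-1/2},y_{j+1/2}]$, $E_{i,j+1/2}=[x_{i-1/2},x_{i+1/2}]\times\{y_{j+1/2}\}$. $\Omega^h=\{(x_i,y_j):C_{ij}\cap\Omega\ne\emptyset\}$. Heaviside: $H_{i+1/2,j}=\mathrm{length}(E_{i+1/2,j}\cap\Omega)/h$, $H_{i,j+1/2}=\mathrm{length}(E_{i,j+1/2}\cap\Omega)/h$. $(\operatorname{G}_xp)_{i+1/2,j}=(p_{i+1,j}-p_{ij})/h$, $(\operatorname{G}_yp)_{i,j+1/2}=(p_{i,j+1}-p_{ij})/h$, $\operatorname{G}p=(\operatorname{G}_xp,\operatorname{G}_yp)$; $(\operatorname{D}(u,v))_{ij}=(u_{i+1/2,j}-u_{i-1/2,j})/h+(v_{i,j+1/2}-v_{i,j-1/2})/h$; $(\operatorname{G}H)_{ij}=((H_{i+1/2,j}-H_{i-1/2,j})/h,(H_{i,j+1/2}-H_{i,j-1/2})/h)$. $\vec J^h_{ij}=(\tilde{\vec x}_{ij}-\vec c)\times(\operatorname{G}H)_{ij}$ (planar cross product $a_1b_2-a_2b_1$), $\vec c\in\mathbb{R}^2$ fixed, $\tilde{\vec x}_{ij}=\frac12(\vec x+\vec y)$ if $\partial C_{ij}\cap\partial\Omega=\{\vec x,\vec y\}$ and $0$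 if $\partial C_{ij}\cap\partial\Omega=\emptyset$. Constants $\rho,m>0$, inertia $\mathbb{I}>0$ (scalar). $(L^hp)_{ij}=-(\operatorname{D}(\frac H\rho\operatorname{G}p))_{ij}+(\operatorname{G}H)_{ij}\cdot\frac1m\sum_{k,l}p_{kl}(\operatorname{G}H)_{kl}h^2+\vec J^h_{ij}\mathbb{I}^{-1}\sum_{k,l}p_{kl}\vec J^h_{kl}h^2$ for $p:\Omega^h\to\mathbb{R}$, sums over $\Omega^h$. $\{1_{\Omega^h}\}^\perp=\{p:\sum_{\Omega^h}p=0\}$. *)

From HB Require Import structures.
From mathcomp Require Import all_boot all_order all_algebra.
From mathcomp Require Import all_classical all_reals all_analysis.
Set Implicit Arguments. Unset Strict Implicit. Unset Printing Implicit Defensive.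
Import Order.TTheory GRing.Theory Num.Theory.
Local Open Scope classical_set_scope.
Local Open Scope ring_scope.
Import numFieldNormedType.Exports.

Section Grid.
Variable R : realType.

Definition gc (h : R) (k : int) : R := k%:~R * h.
Definition gch (h : R) (k : int) : R := (k%:~R + 2^-1) * h.
Definition gcmh (h : R) (k : int) : R := (k%:~R - 2^-1) * h.

Definition bdry {T : topologicalType} (A : set T) : set T :=
  closure A `\` interior A.

Definition cell (h : R) (ij : int * int) : set (R * R) :=
  [set z | gcmh h ij.1 <= z.1 <= gch h ij.1 /\ gcmh h ij.2 <= z.2 <= gch h ij.2].

Definition Omh (Om : set (R * R)) (h : R) : set (int * int) :=
  [set ij | cell h ij `&` Om !=set0].

(* Heaviside on vertical edges: Hx (i,j) = H_{i+1/2,j}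
   = length(E_{i+1/2,j} /\ Om) / h, length = 1D Lebesgue measure *)
Definition Hx (Om : set (R * R)) (h : R) (ij : int * int) : R :=
  fine (lebesgue_measure
    [set y : R | gcmh h ij.2 <= y <= gch h ij.2 /\ Om (gch h ij.1, y)]) / h.

(* Heaviside on horizontal edges: Hy (i,j) = H_{i,j+1/2} *)
Definition Hy (Om : set (R * R)) (h : R) (ij : int * int) : R :=
  fine (lebesgue_measure
    [set x : R | gcmh h ij.1 <= x <= gch h ij.1 /\ Om (x, gch h ij.2)]) / h.

(* edge functions: Ux (i,j) = U_{i+1/2,j}, Uy (i,j) = U_{i,j+1/2} *)
Definition Gx (h : R) (p : int * int -> R) (ij : int * int) : R :=
  (p (ij.1 + 1, ij.2)%R - p ij) / h.
Definition Gy (h : R) (p : int * int -> R) (ij : int * int) : R :=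
  (p (ij.1, ij.2 + 1)%R - p ij) / h.

Definition Dv (h : R) (Ux Uy : int * int -> R) (ij : int * int) : R :=
  (Ux ij - Ux (ij.1 - 1, ij.2)%R) / h + (Uy ij - Uy (ij.1, ij.2 - 1)%R) / h.

Definition GHx (Om : set (R * R)) (h : R) (ij : int * int) : R :=
  (Hx Om h ij - Hx Om h (ij.1 - 1, ij.2)%R) / h.
Definition GHy (Om : set (R * R)) (h : R) (ij : int * int) : R :=
  (Hy Om h ij - Hy Om h (ij.1, ij.2 - 1)%R) / h.

Definition xtilde_spec (Om : set (R * R)) (h : R) (xt : int * int -> R * R) : Prop :=
  forall ij : int * int,
    (forall a b : R * R, a != b ->
       @bdry (R * R)%type (cell h ij) `&` @bdry (R * R)%type Om = [set a] `|` [set b] ->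
       xt ij = ((a.1 + b.1) / 2, (a.2 + b.2) / 2)) /\
    (@bdry (R * R)%type (cell h ij) `&` @bdry (R * R)%type Om = set0 -> xt ij = (0, 0)).

Definition Jh (Om : set (R * R)) (h : R) (c : R * R) (xt : int * int -> R * R)
    (ij : int * int) : R :=
  ((xt ij).1 - c.1) * GHy Om h ij - ((xt ij).2 - c.2) * GHx Om h ij.

Definition sOmh (Om : set (R * R)) (h : R) (F : int * int -> R) : R :=
  \sum_(kl \in Omh Om h) (F kl * h ^+ 2).

Definition Lh (Om : set (R * R)) (h rho m I : R) (c : R * R)
    (xt : int * int -> R * R) (p : int * int -> R) (ij : int * int) : R :=
  - Dv h (fun e => Hx Om h e / rho * Gx h p e) (fun e => Hy Om h e / rho * Gy h p e) ij
  + (GHx Om h ij * (m^-1 * sOmh Om h (fun kl => p kl * GHx Om h kl))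
     + GHy Om h ij * (m^-1 * sOmh Om h (fun kl => p kl * GHy Om h kl)))
  + Jh Om h c xt ij * (I^-1 * sOmh Om h (fun kl => p kl * Jh Om h c xt kl)).

Definition Eh (Om : set (R * R)) (h rho m I : R) (Ux Uy : int * int -> R)
    (v : R * R) (w : R) : R :=
  2^-1 * (\sum_(ij \in [set: int * int])
            ((rho * Hx Om h ij * (Ux ij) ^+ 2 + rho * Hy Om h ij * (Uy ij) ^+ 2) * h ^+ 2))
  + 2^-1 * m * (v.1 ^+ 2 + v.2 ^+ 2) + 2^-1 * w * I * w.

Definition bounded2 (Om : set (R * R)) : Prop :=
  exists M : R, forall z, Om z -> `|z.1| <= M /\ `|z.2| <= M.

End Grid.

(* Write X = (U, v, w) for a discrete state, <X, Y>_M for the mass-weighted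
   inner product (weights rho H h^2 on edges, m, I), so that E_h X = <X, X>_M / 2,
   and B X = - D(H U) + v.GH + w J^h.  Discrete summation by parts (H vanishes
   on every edge not touching Omega^h) shows that the correction
   d = (rho^-1 G p, m^-1 sum p GH h^2, I^-1 sum p J^h h^2) satisfies
   <X, d>_M = sum_{Omega^h} p (B X) h^2 for every X, and that L^h p = B d.
   Hence the equation L^h p = B X* gives <X*, d>_M = <d, d>_M = 2 E_h d, and
   E_h (X* - d) = E_h X* - E_h d <= E_h X*. *)

From HB Require Import structures.
From mathcomp Require Import all_boot all_order all_algebra.
From mathcomp Require Import all_classical all_reals all_analysis.
From mathcomp Require Import finmap ring lra.
Set Implicit Arguments.
Unset Strict Implicit.
Unset Printing Implicit Defensive.

Import Order.TTheory GRing.Theory Num.Theory.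
Local Open Scope classical_set_scope.
Local Open Scope ring_scope.
Import numFieldNormedType.Exports.

Section FinitelySupportedSums.
Variables (T : choiceType) (R : comPzRingType).

Definition fin_supp (f : T -> R) := finite_set [set x | f x != 0].

Lemma fin_supp2 (f g1 g2 : T -> R) : fin_supp g1 -> fin_supp g2 ->
  (forall x, g1 x = 0 -> g2 x = 0 -> f x = 0) -> fin_supp f.
Proof.
move=> fg1 fg2 fg; have fU : finite_set ([set x | g1 x != 0] `|` [set x | g2 x != 0]).
  by rewrite finite_setU.
apply: sub_finite_set fU => x /=; apply: contra_neqP.
by move=> /not_orP[/negP/negPn/eqP g10 /negP/negPn/eqP g20]; exact: fg.
Qed.

Lemma fin_supp_comp (f : T -> R) (s t : T -> T) : cancel s t -> fin_supp f ->
  fin_supp (fun x => f (s x)).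
Proof.
move=> st ff; apply: sub_finite_set (finite_image t ff) => x /= fsx.
by exists (s x).
Qed.

Lemma fsumT_fset (f : T -> R) (A : set T) : finite_set A ->
  [set x | f x != 0] `<=` A -> \sum_(x \in [set: T]) f x = \sum_(x <- fset_set A) f x.
Proof.
move=> finA fA; apply: fsbigTE => x; apply: contraNeq => /fA Ax.
by rewrite in_fset_set // mem_set.
Qed.

Lemma fsumTD (f g : T -> R) : fin_supp f -> fin_supp g ->
  \sum_(x \in [set: T]) (f x + g x) = \sum_(x \in [set: T]) f x + \sum_(x \in [set: T]) g x.
Proof.
move=> ff fg; have fU : finite_set ([set x | f x != 0] `|` [set x | g x != 0]).
  by rewrite finite_setU.
rewrite !(fsumT_fset fU) ?big_split // => x /=.
by case: (eqVneq (f x) 0) => [->|]; [rewrite add0r; right | left].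
Qed.

Lemma fsumTB (f g : T -> R) : fin_supp f -> fin_supp g ->
  \sum_(x \in [set: T]) (f x - g x) = \sum_(x \in [set: T]) f x - \sum_(x \in [set: T]) g x.
Proof.
move=> ff fg; have fU : finite_set ([set x | f x != 0] `|` [set x | g x != 0]).
  by rewrite finite_setU.
rewrite !(fsumT_fset fU) ?sumrB // => x /=.
by case: (eqVneq (f x) 0) => [->|]; [rewrite sub0r oppr_eq0; right | left].
Qed.

Lemma fsumT_shift (f q : T -> R) (s t : T -> T) : cancel s t -> cancel t s ->
  fin_supp f ->
  \sum_(x \in [set: T]) f x * (q (t x) - q x) =
  \sum_(x \in [set: T]) (f (s x) - f x) * q x.
Proof.
move=> st ts ff; have ffs := fin_supp_comp st ff.
have fmul g r : fin_supp g -> fin_supp (fun x => g x * r x).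
  by move=> fg; apply: (fin_supp2 fg fg) => x -> _; rewrite mul0r.
under eq_fsbigr do rewrite mulrBr.
under [RHS]eq_fsbigr do rewrite mulrBl.
rewrite (fsumTB (fmul _ _ ff) (fmul _ _ ff)) (fsumTB (fmul _ _ ffs) (fmul _ _ ff)).
rewrite (@reindex_fsbigT R 0 _ T T s (fun x => f x * q (t x))); last by exists t.
by congr (_ - _); apply: eq_fsbigr => x _; rewrite st.
Qed.

End FinitelySupportedSums.

Section Grid.
Variable R : realType.

Definition shiftx (d : int) (ij : int * int) : int * int := (ij.1 + d, ij.2).
Definition shifty (d : int) (ij : int * int) : int * int := (ij.1, ij.2 + d).

Lemma shiftxK d : cancel (shiftx d) (shiftx (- d)).
Proof. by case=> i j; rewrite /shiftx /= addrK. Qed.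
Lemma shiftxNK d : cancel (shiftx (- d)) (shiftx d).
Proof. by case=> i j; rewrite /shiftx /= addrNK. Qed.
Lemma shiftyK d : cancel (shifty d) (shifty (- d)).
Proof. by case=> i j; rewrite /shifty /= addrK. Qed.
Lemma shiftyNK d : cancel (shifty (- d)) (shifty d).
Proof. by case=> i j; rewrite /shifty /= addrNK. Qed.

Lemma fsum_grad_div (h : R) (F G q : int * int -> R) :
  h != 0 -> fin_supp F -> fin_supp G ->
  \sum_(ij \in [set: int * int]) (F ij * Gx h q ij + G ij * Gy h q ij) * h ^+ 2 =
  \sum_(ij \in [set: int * int]) q ij * - Dv h F G ij * h ^+ 2.
Proof.
move=> h0 fF fG.
have fmul (f g : int * int -> R) : fin_supp f -> fin_supp (fun e => h * (f e * g e)).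
  by move=> ff; apply: (fin_supp2 ff ff) => e -> _; rewrite mul0r mulr0.
have fFs := fin_supp_comp (shiftxNK 1) fF; have fGs := fin_supp_comp (shiftyNK 1) fG.
have fsub (f g : int * int -> R) : fin_supp f -> fin_supp g ->
    fin_supp (fun e => h * ((f e - g e) * q e)).
  by move=> ff fg; apply: (fin_supp2 ff fg) => e -> ->; rewrite subrr mul0r mulr0.
transitivity (h * (\sum_(e \in [set: int * int]) F e * (q (shiftx 1 e) - q e)) +
              h * (\sum_(e \in [set: int * int]) G e * (q (shifty 1 e) - q e))).
  rewrite !mulr_fsumr -fsumTD; try exact: fmul.
  by apply: eq_fsbigr => e _; rewrite /Gx /Gy /shiftx /shifty; field.
rewrite (fsumT_shift _ (shiftxNK 1) (shiftxK 1) fF).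
rewrite (fsumT_shift _ (shiftyNK 1) (shiftyK 1) fG).
rewrite !mulr_fsumr -fsumTD; try exact: fsub.
by apply: eq_fsbigr => e _; rewrite /Dv /shiftx /shifty; field.
Qed.

Lemma finite_int_ball (n : int) : finite_set [set k : int | `|k| <= n].
Proof.
set N := `|n|%N.
apply: (@sub_finite_set _ _ ((fun k : nat => k%:Z) @` `I_N.+1 `|` (fun k : nat => - k%:Z) @` `I_N.+1)).
  move=> k /= kn; have : (`|k| <= N)%N.
    by rewrite -lez_nat !abszE (le_trans kn (ler_norm n)).
  case: k kn => a _ /= aN; [left; exists a | right; exists a.+1] => //.
by rewrite finite_setU; split; apply: finite_image; exact: finite_II.
Qed.

Lemma gcmh_le_gch (h : R) k : 0 < h -> gcmh h k <= gch h k.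
Proof. by move=> h0; rewrite /gcmh /gch; nra. Qed.

Lemma gch_subr1 (h : R) k : gch h (k - 1) = gcmh h k.
Proof. by rewrite /gch /gcmh intrB mulrDl mulrBl mulrBl /=; lra. Qed.

Lemma cell_index_bound (h M x : R) (k : int) : 0 < h -> `|x| <= M ->
  gcmh h k <= x <= gch h k -> `|k| <= Num.ceil (M / h + 1).
Proof.
move=> h0 xM /andP[lo up]; rewrite /gcmh /gch in lo up.
have [x1 x2] : x <= M /\ - x <= M by move: xM; rewrite ler_norml => /andP[? ?]; split; lra.
have Mh : M / h + 1 = (M + h) / h by field; rewrite gt_eqF.
have kup : k%:~R <= M / h + 1 by rewrite Mh ler_pdivlMr //; nra.
have klo : (- k)%:~R <= M / h + 1 by rewrite Mh ler_pdivlMr // intrN; nra.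
have ceil := ceil_ge (M / h + 1).
rewrite ler_norml lerNl -!(ler_int R).
by rewrite (le_trans kup ceil) (le_trans klo ceil).
Qed.

Variables (Om : set (R * R)) (h : R).

Lemma Omh_finite : 0 < h -> bounded2 Om -> finite_set (Omh Om h).
Proof.
move=> h0 [M OmM]; set N := Num.ceil (M / h + 1).
apply: (@sub_finite_set _ _ ([set k | `|k| <= N] `*` [set k | `|k| <= N])); last first.
  by apply: finite_setX; exact: finite_int_ball.
move=> ij [z [[c1 c2] Oz]]; have [b1 b2] := OmM z Oz.
by split; [exact: cell_index_bound h0 b1 c1 | exact: cell_index_bound h0 b2 c2].
Qed.

Lemma Hx_neq0 ij : Hx Om h ij != 0 ->
  exists2 y, gcmh h ij.2 <= y <= gch h ij.2 & Om (gch h ij.1, y).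
Proof.
apply: contra_neqP => noy; rewrite /Hx.
suff -> : [set y | gcmh h ij.2 <= y <= gch h ij.2 /\ Om (gch h ij.1, y)] = set0.
  by rewrite measure0 mul0r.
by apply/seteqP; split=> y //= [yb Oy]; apply: noy; exists y.
Qed.

Lemma Hy_neq0 ij : Hy Om h ij != 0 ->
  exists2 x, gcmh h ij.1 <= x <= gch h ij.1 & Om (x, gch h ij.2).
Proof.
apply: contra_neqP => nox; rewrite /Hy.
suff -> : [set x | gcmh h ij.1 <= x <= gch h ij.1 /\ Om (x, gch h ij.2)] = set0.
  by rewrite measure0 mul0r.
by apply/seteqP; split=> x //= [xb Ox]; apply: nox; exists x.
Qed.

(* The edge E_{i+1/2,j} lies in both cells C_ij and C_{i+1,j}. *)
Lemma Hx_notin_Omh ij : 0 < h -> ~ Omh Om h ij ->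
  Hx Om h ij = 0 /\ Hx Om h (ij.1 - 1, ij.2) = 0.
Proof.
move=> h0 nO; have le1 := gcmh_le_gch ij.1 h0.
split; apply/eqP; apply: contra_notT nO => /Hx_neq0 [y yb Oy] /=.
  by exists (gch h ij.1, y); split=> //; split=> //=; rewrite le1 lexx.
by exists (gch h (ij.1 - 1), y); split=> //; split=> //=; rewrite gch_subr1 le1 lexx.
Qed.

Lemma Hy_notin_Omh ij : 0 < h -> ~ Omh Om h ij ->
  Hy Om h ij = 0 /\ Hy Om h (ij.1, ij.2 - 1) = 0.
Proof.
move=> h0 nO; have le2 := gcmh_le_gch ij.2 h0.
split; apply/eqP; apply: contra_notT nO => /Hy_neq0 [x xb Ox] /=.
  by exists (x, gch h ij.2); split=> //; split=> //=; rewrite le2 lexx.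
by exists (x, gch h (ij.2 - 1)); split=> //; split=> //=; rewrite gch_subr1 le2 lexx.
Qed.

Lemma Dv_notin_Omh (Ux Uy : int * int -> R) ij : 0 < h -> ~ Omh Om h ij ->
  Dv h (fun e => Hx Om h e * Ux e) (fun e => Hy Om h e * Uy e) ij = 0.
Proof.
move=> h0 nO; have [hx hx'] := Hx_notin_Omh h0 nO; have [hy hy'] := Hy_notin_Omh h0 nO.
by rewrite /Dv hx hx' hy hy' !mul0r subrr mul0r addr0.
Qed.

Lemma Hx_fin_supp : 0 < h -> bounded2 Om -> fin_supp (Hx Om h).
Proof.
move=> h0 Ombd; apply: sub_finite_set (Omh_finite h0 Ombd) => ij /= nz.
by apply: contrapT => /(Hx_notin_Omh h0) [hx _]; rewrite hx eqxx in nz.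
Qed.

Lemma Hy_fin_supp : 0 < h -> bounded2 Om -> fin_supp (Hy Om h).
Proof.
move=> h0 Ombd; apply: sub_finite_set (Omh_finite h0 Ombd) => ij /= nz.
by apply: contrapT => /(Hy_notin_Omh h0) [hy _]; rewrite hy eqxx in nz.
Qed.

Lemma Hx_ge0 ij : 0 < h -> 0 <= Hx Om h ij.
Proof. by move=> h0; rewrite /Hx divr_ge0 ?fine_ge0 ?measure_ge0 ?ltW. Qed.

Lemma Hy_ge0 ij : 0 < h -> 0 <= Hy Om h ij.
Proof. by move=> h0; rewrite /Hy divr_ge0 ?fine_ge0 ?measure_ge0 ?ltW. Qed.

Variables (rho m I : R) (c : R * R) (xt : int * int -> R * R).

Definition Eh_polar (Ux Uy Vx Vy : int * int -> R) (v u : R * R) (w z : R) : R :=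
  \sum_(ij \in [set: int * int])
     ((rho * Hx Om h ij * Ux ij * Vx ij + rho * Hy Om h ij * Uy ij * Vy ij) * h ^+ 2)
  + m * (v.1 * u.1 + v.2 * u.2) + w * I * z.

Definition Bh (Ux Uy : int * int -> R) (v : R * R) (w : R) (ij : int * int) : R :=
  - Dv h (fun e => Hx Om h e * Ux e) (fun e => Hy Om h e * Uy e) ij
  + (v.1 * GHx Om h ij + v.2 * GHy Om h ij) + w * Jh Om h c xt ij.

Lemma Eh_polarxx Ux Uy v w :
  Eh_polar Ux Uy Ux Uy v v w w = 2 * Eh Om h rho m I Ux Uy v w.
Proof.
rewrite /Eh_polar /Eh.
rewrite (eq_fsbigr (fun ij =>
  (rho * Hx Om h ij * Ux ij ^+ 2 + rho * Hy Om h ij * Uy ij ^+ 2) * h ^+ 2)).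
  by field.
by move=> ij _; ring.
Qed.

(* Stated on explicit pairs so that it rewrites (v.1 - u.1, v.2 - u.2) directly. *)
Lemma EhB Ux Uy Vx Vy v1 v2 u1 u2 w z :
  fin_supp (Hx Om h) -> fin_supp (Hy Om h) ->
  Eh Om h rho m I (fun e => Ux e - Vx e) (fun e => Uy e - Vy e) (v1 - u1, v2 - u2) (w - z) =
  Eh Om h rho m I Ux Uy (v1, v2) w - Eh_polar Ux Uy Vx Vy (v1, v2) (u1, u2) w z
  + Eh Om h rho m I Vx Vy (u1, u2) z.
Proof.
move=> fHx fHy; rewrite /Eh /Eh_polar /=.
have fH (f : int * int -> R) : (forall e, Hx Om h e = 0 -> Hy Om h e = 0 -> f e = 0) ->
  fin_supp f by exact: fin_supp2 fHx fHy.
have -> : \sum_(ij \in [set: int * int])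
    ((rho * Hx Om h ij * (Ux ij - Vx ij) ^+ 2 + rho * Hy Om h ij * (Uy ij - Vy ij) ^+ 2)
     * h ^+ 2) =
  \sum_(ij \in [set: int * int])
    ((rho * Hx Om h ij * Ux ij ^+ 2 + rho * Hy Om h ij * Uy ij ^+ 2) * h ^+ 2)
  - 2 * \sum_(ij \in [set: int * int])
    ((rho * Hx Om h ij * Ux ij * Vx ij + rho * Hy Om h ij * Uy ij * Vy ij) * h ^+ 2)
  + \sum_(ij \in [set: int * int])
    ((rho * Hx Om h ij * Vx ij ^+ 2 + rho * Hy Om h ij * Vy ij ^+ 2) * h ^+ 2).
  rewrite mulr_fsumr -fsumTB -?fsumTD; try by apply: fH => e -> ->; ring.
  by apply: eq_fsbigr => ij _; ring.
by field.
Qed.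

Lemma Eh_ge0 Ux Uy v w : 0 < h -> 0 <= rho -> 0 <= m -> 0 <= I ->
  0 <= Eh Om h rho m I Ux Uy v w.
Proof.
move=> h0 rho0 m0 I0; have h2 : 0 <= (2 : R)^-1 by rewrite invr_ge0.
rewrite /Eh; apply: addr_ge0; first apply: addr_ge0.
- rewrite mulr_ge0 // fsumr_ge0 // => ij _.
  have term_ge0 H U : 0 <= H -> 0 <= rho * H * U ^+ 2.
    by move=> H0; rewrite mulr_ge0 ?sqr_ge0 // mulr_ge0.
  apply: mulr_ge0 (sqr_ge0 _); apply: addr_ge0; apply: term_ge0.
  + exact: Hx_ge0.
  + exact: Hy_ge0.
- by have := mulr_ge0 I0 (sqr_ge0 w); nra.
- by have := mulr_ge0 m0 (addr_ge0 (sqr_ge0 v.1) (sqr_ge0 v.2)); nra.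
Qed.

Lemma sOmhD (F G : int * int -> R) : finite_set (Omh Om h) ->
  sOmh Om h (fun ij => F ij + G ij) = sOmh Om h F + sOmh Om h G.
Proof.
move=> fO; rewrite /sOmh -fsbig_split //.
by apply: eq_fsbigr => ij _; rewrite mulrDl.
Qed.

Lemma sOmhZ a (F : int * int -> R) : sOmh Om h (fun ij => a * F ij) = a * sOmh Om h F.
Proof. by rewrite /sOmh mulr_fsumr; apply: eq_fsbigr => ij _; rewrite -mulrA. Qed.

Local Notation SGHx p := (sOmh Om h (fun kl => p kl * GHx Om h kl)).
Local Notation SGHy p := (sOmh Om h (fun kl => p kl * GHy Om h kl)).
Local Notation SJ p := (sOmh Om h (fun kl => p kl * Jh Om h c xt kl)).

Lemma Lh_Bh p ij :
  Lh Om h rho m I c xt p ij =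
  Bh (fun e => rho^-1 * Gx h p e) (fun e => rho^-1 * Gy h p e)
     (m^-1 * SGHx p, m^-1 * SGHy p) (I^-1 * SJ p) ij.
Proof.
rewrite /Lh /Bh /=.
have -> : (fun e => Hx Om h e / rho * Gx h p e) = (fun e => Hx Om h e * (rho^-1 * Gx h p e)).
  by apply: funext => e; ring.
have -> : (fun e => Hy Om h e / rho * Gy h p e) = (fun e => Hy Om h e * (rho^-1 * Gy h p e)).
  by apply: funext => e; ring.
by ring.
Qed.

Lemma Eh_polar_Bh Ux Uy v w p : 0 < h -> bounded2 Om -> rho != 0 -> m != 0 -> I != 0 ->
  Eh_polar Ux Uy (fun e => rho^-1 * Gx h p e) (fun e => rho^-1 * Gy h p e)
    v (m^-1 * SGHx p, m^-1 * SGHy p) w (I^-1 * SJ p) =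
  sOmh Om h (fun ij => p ij * Bh Ux Uy v w ij).
Proof.
move=> h0 Ombd rho0 m0 I0.
have [fHx fHy] := (Hx_fin_supp h0 Ombd, Hy_fin_supp h0 Ombd).
have green : \sum_(ij \in [set: int * int])
    ((rho * Hx Om h ij * Ux ij * (rho^-1 * Gx h p ij)
      + rho * Hy Om h ij * Uy ij * (rho^-1 * Gy h p ij)) * h ^+ 2) =
  sOmh Om h (fun ij => p ij * - Dv h (fun e => Hx Om h e * Ux e) (fun e => Hy Om h e * Uy e) ij).
  rewrite /sOmh (fsbig_widen (Omh Om h) [set: int * int]) //; last first.
    by move=> ij [_ /(Dv_notin_Omh Ux Uy h0) Dv0] /=; rewrite Dv0 oppr0 mulr0 mul0r.
  have fHUx : fin_supp (fun e => Hx Om h e * Ux e).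
    by apply: (fin_supp2 fHx fHx) => e -> _; rewrite mul0r.
  have fHUy : fin_supp (fun e => Hy Om h e * Uy e).
    by apply: (fin_supp2 fHy fHy) => e -> _; rewrite mul0r.
  rewrite -(fsum_grad_div p (lt0r_neq0 h0) fHUx fHUy).
  by apply: eq_fsbigr => ij _; field.
rewrite /Eh_polar green /=.
have -> : (fun ij => p ij * Bh Ux Uy v w ij) = (fun ij =>
    p ij * - Dv h (fun e => Hx Om h e * Ux e) (fun e => Hy Om h e * Uy e) ij
    + (v.1 * (p ij * GHx Om h ij) + v.2 * (p ij * GHy Om h ij))
    + w * (p ij * Jh Om h c xt ij)).
  by apply: funext => ij; rewrite /Bh; ring.
have fO := Omh_finite h0 Ombd.
rewrite !sOmhD // !sOmhZ.
by field; apply/andP.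
Qed.

Lemma Eh_polar_correction Ux Uy v w p : 0 < h -> bounded2 Om -> rho != 0 -> m != 0 -> I != 0 ->
  (forall ij, Omh Om h ij -> Lh Om h rho m I c xt p ij = Bh Ux Uy v w ij) ->
  Eh_polar Ux Uy (fun e => rho^-1 * Gx h p e) (fun e => rho^-1 * Gy h p e)
    v (m^-1 * SGHx p, m^-1 * SGHy p) w (I^-1 * SJ p) =
  2 * Eh Om h rho m I (fun e => rho^-1 * Gx h p e) (fun e => rho^-1 * Gy h p e)
    (m^-1 * SGHx p, m^-1 * SGHy p) (I^-1 * SJ p).
Proof.
move=> h0 Ombd rho0 m0 I0 hL.
rewrite -Eh_polarxx !Eh_polar_Bh //.
by apply: eq_fsbigr => ij /set_mem Oij; rewrite -hL // Lh_Bh.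
Qed.

End Grid.

Theorem theorem4p9 (R : realType) (Om : set (R * R)) (h rho m I : R)
    (c : R * R) (xt : int * int -> R * R)
    (Usx Usy : int * int -> R) (vs : R * R) (ws : R) (p : int * int -> R) :
  @open (R * R)%type Om -> @connected (R * R)%type Om -> Om !=set0 -> bounded2 Om ->
  0 < h -> 0 < rho -> 0 < m -> 0 < I ->
  xtilde_spec Om h xt ->
  (* p in {1_{Omega^h}}^perp *)
  \sum_(kl \in Omh Om h) p kl = 0 ->
  (* L^h p = - D(H U* ) + v*.GH + w* J^h  in Omega^h *)
  (forall ij, Omh Om h ij ->
     Lh Om h rho m I c xt p ij =
       - Dv h (fun e => Hx Om h e * Usx e) (fun e => Hy Om h e * Usy e) ij
       + (vs.1 * GHx Om h ij + vs.2 * GHy Om h ij)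
       + ws * Jh Om h c xt ij) ->
  Eh Om h rho m I Usx Usy vs ws >=
  Eh Om h rho m I
     (fun e => Usx e - rho^-1 * Gx h p e)
     (fun e => Usy e - rho^-1 * Gy h p e)
     (vs.1 - m^-1 * sOmh Om h (fun kl => p kl * GHx Om h kl),
      vs.2 - m^-1 * sOmh Om h (fun kl => p kl * GHy Om h kl))
     (ws - I^-1 * sOmh Om h (fun kl => p kl * Jh Om h c xt kl)).
Proof.
move=> _ _ _ Ombd h0 rho0 m0 I0 _ _ hL.
have [fHx fHy] := (Hx_fin_supp h0 Ombd, Hy_fin_supp h0 Ombd).
rewrite EhB // Eh_polar_correction ?lt0r_neq0 // -surjective_pairing.
set dE := Eh _ _ _ _ _ (fun e => rho^-1 * Gx h p e) _ _ _.
have : 0 <= dE by apply: Eh_ge0; rewrite ?ltW.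
lra.
Qed.
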